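(* Let $(x_n)$ be generated by (HPPA). Assume there are monotone functions ${\rm a},{\rm b},{\rm B},{\rm E}:\mathbb{N}\to\mathbb{N}$ satisfying (Q1), (Q3'), (Q3), (Q4) respectively, and a function ${\rm A'}:\mathbb{N}\times\mathbb{N}\to\mathbb{N}$, monotone in both variables, satisfying (Q2'). Let $\mathcal{E},\mathcal{D}\in\mathbb{N}$ satisfy $\mathcal{E}\geq 1+\sum_{i=0}^{{\rm E}(0)}\|e_i\|$ and $\mathcal{D}\geq\|x_0-p\|$ for some $p\in S$, and set $N:=\max\{2\mathcal{D},\mathcal{D}+\mathcal{E}\}$. Then for every $k\in\mathbb{N}$ and every monotone $f:\mathbb{N}\to\mathbb{N}$, $$\exists n\leq\Phi_2(k,f)\ \forall i,j\in[n,f(n)]\ \left(\|x_i-x_j\|\leq\frac{1}{k+1}\right),$$ where $\Phi_2(k,f):=\sigma_2(\tilde k,g(\Delta))$ and: $\sigma_2(k',n'):={\rm A'}\big(n',\,16N^2(k'+1)-1\big)+1$; $\tilde k:=4(k+1)^2-1$; $g(m):=\max\{m,\ {\rm E}(16(1+4N)(k+1)^2-1)+1\}$; $\bar h_f(m):=(1+4N)\big(16(k+1)^2(f(\sigma_2(\tilde k,g(m)))+1)+1\big)-1$; $\Delta:=\Psi(32(k+1)^2-1,\,\bar h_f)$, where for $k'\in\mathbb{N}$ and monotone $u:\mathbb{N}\to\mathbb{N}$, $\Psi(k',u):=\chi_1\big(24N(w_{\hat\nu_u,N}^{(R)}(0)+1)^2\big)$ with $R:=4N^4(k'+1)^2$,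 $\nu_u(m):=\max\{2,{\rm b}(u(m))\}(u(m)+1)-1$, $\hat\nu_u(m):=\nu_u(\chi_1(m))$, $w_{v,N}(m):=\max\{v(24N(m+1)^2),24N(m+1)^2\}$, $\xi(k''):=\max\{{\rm a}(2(2\mathcal{D}+\mathcal{E})(k''+1)-1),{\rm E}(2k''+1)+1\}$ and $\chi_1(k''):=\max\{\xi(4k''+3),{\rm B}(8(\mathcal{D}+\mathcal{E})(k''+1)-1)\}+1$.
   Context: $X$ is a real Hilbert space, $\mathsf{A}:X\to 2^X$ a maximal monotone operator with zero set $S=\{x:0\in\mathsf{A}(x)\}$, assumed nonempty. For $\beta>0$, $J_\beta:=(Id+\beta\mathsf{A})^{-1}$ is the resolvent, a single-valued nonexpansive map with fixed point set $S$. Given $(\alpha_n)\subset\,]0,1[$, $(\beta_n)\subset(0,\infty)$, $(e_n)\subset X$, $x_0\in X$, (HPPA) is the sequence $x_{n+1}:=\alpha_n x_0+(1-\alpha_n)(J_{\beta_n}(x_n)+e_n)$. (Q1): $\forall k\,\forall n\geq{\rm a}(k)\ \alpha_n\leq\frac{1}{k+1}$. (Q2'): $\forall k,m\ \prod_{i=m}^{{\rm A'}(m,k)}(1-\alpha_i)\leq\frac{1}{k+1}$. ${\rm A'}$ monotone in both variables: $k\le k'$, $m\le m'$ imply ${\rm A'}(m,k)\le{\rm A'}(m',k')$. (Q3'): $\forall n\ \beta_n\leq{\rm b}(n)$. (Q3): $\forall k\,\forall n\geq{\rm B}(k)\ \beta_n\geq k$. (Q4): $\forall k\,\forall n\ \sum_{i={\rm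 E}(k)+1}^{{\rm E}(k)+n}\|e_i\|\leq\frac{1}{k+1}$. Monotone means nondecreasing. $v^{(R)}$ is the $R$-fold composition of $v$ ($v^{(0)}$ the identity). $[a,b]$ is the set of naturals $m$ with $a\le m\le b$. *)

From Stdlib Require Import Reals Lra Lia Arith List.
Open Scope R_scope.

Record HilbertSpace := {
  hs_car :> Type;
  hs_zero : hs_car;
  hs_add : hs_car -> hs_car -> hs_car;
  hs_opp : hs_car -> hs_car;
  hs_scal : R -> hs_car -> hs_car;
  hs_inner : hs_car -> hs_car -> R;
  hs_add_assoc : forall x y z, hs_add x (hs_add y z) = hs_add (hs_add x y) z;
  hs_add_comm : forall x y, hs_add x y = hs_add y x;
  hs_add_zero : forall x, hs_add x hs_zero = x;
  hs_add_opp : forall x, hs_add x (hs_opp x) = hs_zero;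
  hs_scal_assoc : forall a b x, hs_scal a (hs_scal b x) = hs_scal (a * b) x;
  hs_scal_one : forall x, hs_scal 1 x = x;
  hs_scal_add_r : forall a x y, hs_scal a (hs_add x y) = hs_add (hs_scal a x) (hs_scal a y);
  hs_scal_add_l : forall a b x, hs_scal (a + b) x = hs_add (hs_scal a x) (hs_scal b x);
  hs_inner_sym : forall x y, hs_inner x y = hs_inner y x;
  hs_inner_add_l : forall x y z, hs_inner (hs_add x y) z = hs_inner x z + hs_inner y z;
  hs_inner_scal_l : forall a x y, hs_inner (hs_scal a x) y = a * hs_inner x y;
  hs_inner_pos : forall x, 0 <= hs_inner x x;
  hs_inner_def : forall x, hs_inner x x = 0 -> x = hs_zero;
  hs_complete : forall u : nat -> hs_car,
    (forall eps, 0 < eps -> exists n0, forall m n, (n0 <= m)%nat -> (n0 <= n)%nat ->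
        sqrt (hs_inner (hs_add (u m) (hs_opp (u n))) (hs_add (u m) (hs_opp (u n)))) < eps) ->
    exists l, forall eps, 0 < eps -> exists n0, forall n, (n0 <= n)%nat ->
        sqrt (hs_inner (hs_add (u n) (hs_opp l)) (hs_add (u n) (hs_opp l))) < eps
}.

Arguments hs_zero {h}. Arguments hs_add {h}. Arguments hs_opp {h}.
Arguments hs_scal {h}. Arguments hs_inner {h}.

Definition hs_sub {X : HilbertSpace} (x y : X) : X := hs_add x (hs_opp y).
Definition hs_norm {X : HilbertSpace} (x : X) : R := sqrt (hs_inner x x).

(* Set-valued operator A : X -> 2^X, encoded by its graph: A x u  <->  u \in A(x). *)
Definition monotone_op {X : HilbertSpace} (A : X -> X -> Prop) : Prop :=
  forall x y u v, A x u -> A y v -> 0 <= hs_inner (hs_sub x y) (hs_sub u v).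

Definition maximal_monotone {X : HilbertSpace} (A : X -> X -> Prop) : Prop :=
  monotone_op A /\
  forall x u, (forall y v, A y v -> 0 <= hs_inner (hs_sub x y) (hs_sub u v)) -> A x u.

(* J is the resolvent of A: for beta > 0, y = J beta x  iff  x \in y + beta A(y),
   i.e. (1/beta)(x - y) \in A(y).  (Single-valued by monotonicity.) *)
Definition is_resolvent {X : HilbertSpace} (A : X -> X -> Prop) (J : R -> X -> X) : Prop :=
  forall beta x, 0 < beta -> A (J beta x) (hs_scal (/ beta) (hs_sub x (J beta x))).

Fixpoint hppa {X : HilbertSpace} (J : R -> X -> X) (alpha beta : nat -> R)
  (e : nat -> X) (x0 : X) (n : nat) : X :=
  match n with
  | O => x0
  | S m => hs_add (hs_scal (alpha m) x0)
             (hs_scal (1 - alpha m) (hs_add (J (beta m) (hppa J alpha beta e x0 m)) (e m)))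
  end.

(* prod_{i=m}^{n} f i and sum_{i=m}^{n} f i (empty = 1 resp. 0 if n < m) *)
Definition rprod_range (f : nat -> R) (m n : nat) : R :=
  fold_right Rmult 1 (map f (seq m (S n - m))).
Definition rsum_range (f : nat -> R) (m n : nat) : R :=
  fold_right Rplus 0 (map f (seq m (S n - m))).

Definition nat_monotone (f : nat -> nat) : Prop := forall m n, (m <= n)%nat -> (f m <= f n)%nat.

(* Rates, all in nat arithmetic (truncated subtraction; all subtracted terms are >= 1
   under the hypotheses). *)
Open Scope nat_scope.

Definition Nbound (D Ec : nat) : nat := Nat.max (2 * D) (D + Ec).

Definition sigma2 (A' : nat -> nat -> nat) (N k' n' : nat) : nat :=
  A' n' (16 * N ^ 2 * (k' + 1) - 1) + 1.

Definition xi (a E : nat -> nat) (D Ec k'' : nat) : nat :=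
  Nat.max (a (2 * (2 * D + Ec) * (k'' + 1) - 1)) (E (2 * k'' + 1) + 1).

Definition chi1 (a B E : nat -> nat) (D Ec k'' : nat) : nat :=
  Nat.max (xi a E D Ec (4 * k'' + 3)) (B (8 * (D + Ec) * (k'' + 1) - 1)) + 1.

Definition wfun (v : nat -> nat) (N m : nat) : nat :=
  Nat.max (v (24 * N * (m + 1) ^ 2)) (24 * N * (m + 1) ^ 2).

Definition nu (b u : nat -> nat) (m : nat) : nat :=
  Nat.max 2 (b (u m)) * (u m + 1) - 1.

Definition Psi (a b B E : nat -> nat) (D Ec k' : nat) (u : nat -> nat) : nat :=
  let N := Nbound D Ec in
  let R := 4 * N ^ 4 * (k' + 1) ^ 2 in
  let nuhat := fun m => nu b u (chi1 a B E D Ec m) in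
  chi1 a B E D Ec (24 * N * (Nat.iter R (wfun nuhat N) 0 + 1) ^ 2).

Definition Phi2 (a b B E : nat -> nat) (A' : nat -> nat -> nat) (D Ec k : nat)
  (f : nat -> nat) : nat :=
  let N := Nbound D Ec in
  let ktilde := 4 * (k + 1) ^ 2 - 1 in
  let g := fun m => Nat.max m (E (16 * (1 + 4 * N) * (k + 1) ^ 2 - 1) + 1) in
  let hbar := fun m => (1 + 4 * N) * (16 * (k + 1) ^ 2 * (f (sigma2 A' N ktilde (g m)) + 1) + 1) - 1 in
  let Delta := Psi a b B E D Ec (32 * (k + 1) ^ 2 - 1) hbar in
  sigma2 A' N ktilde (g Delta).

Close Scope nat_scope.

(* The iterates stay in the ball of radius D + Ec around p, and from chi1(K) on they are
   (1/(K+1))-fixed points of J_1.  The squared distance d_m from x0 to the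
   (1/(m+1))-approximate zeros of A in that ball lies in [0, D^2], so along R iterates of w
   some step raises d by at most eps; a near-minimiser z at that step satisfies the
   variational inequality <x0 - z, y - z> <= 1/(k'+1) for every good enough approximate zero
   y, a metastable version of the projection of x0 onto S.  Since the iterates are such y,
   the Halpern recursion
     |x_{i+1} - z|^2 <= (1 - alpha_i) |x_i - z|^2 + 2 alpha_i/(k'+1) + O(|J_{beta_i} z - z| + |e_i|),
   together with (Q2'), keeps them within 1/(2(k+1)) of z on [sigma, f(sigma)]. *)

From Pilot Require Import Defs.
From Stdlib Require Import Reals Lra Lia Arith List Classical_Prop.
Open Scope R_scope.

(** * Inner product spaces *)

Section InnerProduct.
Context {X : HilbertSpace}.
Implicit Types (x y z u v w : X).

Lemma inner_add_r x y z : hs_inner x (hs_add y z) = hs_inner x y + hs_inner x z.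
Proof. rewrite hs_inner_sym, hs_inner_add_l, (hs_inner_sym _ y), (hs_inner_sym _ z). ring. Qed.

Lemma inner_scal_r a x y : hs_inner x (hs_scal a y) = a * hs_inner x y.
Proof. rewrite hs_inner_sym, hs_inner_scal_l, (hs_inner_sym _ y). ring. Qed.

Lemma inner_zero_l y : hs_inner hs_zero y = 0.
Proof. pose proof (hs_inner_add_l X hs_zero hs_zero y) as H. rewrite hs_add_zero in H. lra. Qed.

Lemma inner_zero_r y : hs_inner y hs_zero = 0.
Proof. rewrite hs_inner_sym. apply inner_zero_l. Qed.

Lemma inner_opp_l x y : hs_inner (hs_opp x) y = - hs_inner x y.
Proof.
  pose proof (hs_inner_add_l X x (hs_opp x) y) as H.
  rewrite hs_add_opp, inner_zero_l in H. lra.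
Qed.

Lemma inner_opp_r x y : hs_inner x (hs_opp y) = - hs_inner x y.
Proof. rewrite hs_inner_sym, inner_opp_l, hs_inner_sym. reflexivity. Qed.

Lemma sub_eq0 u v : hs_inner (hs_sub u v) (hs_sub u v) = 0 -> u = v.
Proof.
  unfold hs_sub. intro H. apply hs_inner_def in H.
  rewrite <- (hs_add_zero X v), <- H, (hs_add_comm X u), hs_add_assoc, hs_add_opp,
    hs_add_comm, hs_add_zero.
  reflexivity.
Qed.

End InnerProduct.

Tactic Notation "expand_inner" := unfold hs_sub, hs_norm;
  repeat rewrite ?hs_inner_add_l, ?inner_add_r, ?hs_inner_scal_l, ?inner_scal_r,
    ?inner_opp_l, ?inner_opp_r, ?inner_zero_l, ?inner_zero_r.
Tactic Notation "expand_inner" "in" hyp(H) := unfold hs_sub, hs_norm in H;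
  repeat rewrite ?hs_inner_add_l, ?inner_add_r, ?hs_inner_scal_l, ?inner_scal_r,
    ?inner_opp_l, ?inner_opp_r, ?inner_zero_l, ?inner_zero_r in H.

Ltac sort_inner := repeat match goal with |- context [hs_inner ?a ?b] =>
  match goal with |- context [hs_inner b a] =>
    assert_fails (constr_eq a b); rewrite (hs_inner_sym _ b a) end end.

(* A vector identity [u = v] is reduced to the scalar identity [|u - v|^2 = 0]. *)
Ltac vec_eq := apply sub_eq0; expand_inner; sort_inner; field.

Section Norm.
Context {X : HilbertSpace}.
Implicit Types (x y z u v w : X).

Lemma norm_nonneg x : 0 <= hs_norm x.
Proof. apply sqrt_pos. Qed.

Lemma norm_sq x : hs_norm x * hs_norm x = hs_inner x x.
Proof. apply sqrt_sqrt, hs_inner_pos. Qed.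

Lemma norm_le_sq x c : 0 <= c -> hs_inner x x <= c * c -> hs_norm x <= c.
Proof. intros Hc H. unfold hs_norm. rewrite <- (sqrt_square c) by exact Hc. now apply sqrt_le_1_alt. Qed.

Lemma cauchy_schwarz_sq x y : hs_inner x y * hs_inner x y <= hs_inner x x * hs_inner y y.
Proof.
  destruct (Req_dec (hs_inner y y) 0) as [Hy | Hy].
  - apply hs_inner_def in Hy. subst y. rewrite !inner_zero_r. lra.
  - assert (Hpos : 0 < hs_inner y y) by (pose proof (hs_inner_pos X y); lra).
    pose proof (hs_inner_pos X (hs_sub (hs_scal (hs_inner y y) x) (hs_scal (hs_inner x y) y))) as H.
    expand_inner in H. rewrite (hs_inner_sym _ y x) in H.
    apply Rmult_le_reg_l with (hs_inner y y); nra.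
Qed.

Lemma cauchy_schwarz x y : hs_inner x y <= hs_norm x * hs_norm y.
Proof.
  unfold hs_norm. rewrite <- sqrt_mult_alt by apply hs_inner_pos.
  eapply Rle_trans; [apply Rle_abs|].
  rewrite <- sqrt_Rsqr_abs. apply sqrt_le_1_alt. apply cauchy_schwarz_sq.
Qed.

Lemma norm_triangle x y : hs_norm (hs_add x y) <= hs_norm x + hs_norm y.
Proof.
  apply norm_le_sq; [pose proof (norm_nonneg x); pose proof (norm_nonneg y); lra|].
  pose proof (cauchy_schwarz x y). pose proof (norm_sq x). pose proof (norm_sq y).
  rewrite hs_inner_add_l, !inner_add_r, (hs_inner_sym _ y x). nra.
Qed.

Lemma norm_scal a x : hs_norm (hs_scal a x) = Rabs a * hs_norm x.
Proof.
  unfold hs_norm. rewrite hs_inner_scal_l, inner_scal_r, <- Rmult_assoc, sqrt_mult_alt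
    by apply Rle_0_sqr.
  now rewrite <- (sqrt_Rsqr_abs a).
Qed.

Lemma norm_scal_nonneg a x : 0 <= a -> hs_norm (hs_scal a x) = a * hs_norm x.
Proof. intro Ha. now rewrite norm_scal, Rabs_pos_eq. Qed.

Lemma norm_sub_sym x y : hs_norm (hs_sub x y) = hs_norm (hs_sub y x).
Proof. unfold hs_norm. f_equal. expand_inner. rewrite (hs_inner_sym _ y x). ring. Qed.

Lemma norm_sub_tri x y z : hs_norm (hs_sub x z) <= hs_norm (hs_sub x y) + hs_norm (hs_sub y z).
Proof.
  replace (hs_sub x z) with (hs_add (hs_sub x y) (hs_sub y z)) by vec_eq.
  apply norm_triangle.
Qed.

Lemma norm_sub_diag x : hs_norm (hs_sub x x) = 0.
Proof. unfold hs_norm, hs_sub. rewrite hs_add_opp, inner_zero_l. apply sqrt_0. Qed.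

Lemma norm_convex_comb t u v : 0 <= t <= 1 ->
  hs_norm (hs_add (hs_scal t u) (hs_scal (1 - t) v)) <= t * hs_norm u + (1 - t) * hs_norm v.
Proof.
  intro Ht. eapply Rle_trans; [apply norm_triangle|].
  rewrite !norm_scal_nonneg by lra. lra.
Qed.

Lemma convex_comb_sub_sq al u w z :
  hs_inner (hs_sub (hs_add (hs_scal al u) (hs_scal (1 - al) w)) z)
           (hs_sub (hs_add (hs_scal al u) (hs_scal (1 - al) w)) z) =
  (1 - al) * (1 - al) * hs_inner (hs_sub w z) (hs_sub w z)
  + 2 * al * hs_inner (hs_sub u z) (hs_sub (hs_add (hs_scal al u) (hs_scal (1 - al) w)) z)
  - al * al * hs_inner (hs_sub u z) (hs_sub u z).
Proof. expand_inner. sort_inner. ring. Qed.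

End Norm.

(** * Resolvents of monotone operators *)

Section Resolvent.
Context {X : HilbertSpace} (A : X -> X -> Prop) (J : R -> X -> X).
Hypothesis A_monotone : monotone_op A.
Hypothesis J_resolvent : is_resolvent A J.

Lemma resolvent_graph beta y v : 0 < beta -> A y v -> J beta (hs_add y (hs_scal beta v)) = y.
Proof.
  intros Hb Hv. set (w := J beta (hs_add y (hs_scal beta v))).
  pose proof (A_monotone _ _ _ _ (J_resolvent beta (hs_add y (hs_scal beta v)) Hb) Hv) as H.
  fold w in H.
  assert (Heq : hs_inner (hs_sub w y) (hs_sub (hs_scal (/ beta) (hs_sub (hs_add y (hs_scal beta v)) w)) v)
     = - / beta * hs_inner (hs_sub w y) (hs_sub w y)).
  { expand_inner. sort_inner. field. lra. }
  rewrite Heq in H.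
  pose proof (hs_inner_pos X (hs_sub w y)).
  assert (0 < / beta) by (apply Rinv_0_lt_compat; lra).
  apply sub_eq0. nra.
Qed.

Lemma resolvent_zero beta p : 0 < beta -> A p hs_zero -> J beta p = p.
Proof.
  intros Hb Hp. rewrite <- (resolvent_graph beta p hs_zero Hb Hp) at 2.
  f_equal. vec_eq.
Qed.

Lemma resolvent_nonexpansive beta x y : 0 < beta ->
  hs_norm (hs_sub (J beta x) (J beta y)) <= hs_norm (hs_sub x y).
Proof.
  intro Hb.
  pose proof (A_monotone _ _ _ _ (J_resolvent beta x Hb) (J_resolvent beta y Hb)) as H.
  set (u := J beta x) in *. set (w := J beta y) in *.
  assert (Heq : hs_inner (hs_sub u w) (hs_sub (hs_scal (/ beta) (hs_sub x u)) (hs_scal (/ beta) (hs_sub y w)))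
    = / beta * (hs_inner (hs_sub u w) (hs_sub x y) - hs_inner (hs_sub u w) (hs_sub u w))).
  { expand_inner. sort_inner. field. lra. }
  rewrite Heq in H.
  assert (Huw : hs_inner (hs_sub u w) (hs_sub u w) <= hs_inner (hs_sub u w) (hs_sub x y)).
  { assert (0 < / beta) by (apply Rinv_0_lt_compat; lra). nra. }
  pose proof (cauchy_schwarz (hs_sub u w) (hs_sub x y)).
  rewrite <- norm_sq in Huw.
  pose proof (norm_nonneg (hs_sub u w)). pose proof (norm_nonneg (hs_sub x y)).
  nra.
Qed.

Lemma resolvent_identity lam mu x : 0 < lam -> 0 < mu ->
  J lam (hs_add (hs_scal (lam / mu) x) (hs_scal (1 - lam / mu) (J mu x))) = J mu x.
Proof.
  intros Hl Hm.
  rewrite <- (resolvent_graph lam _ _ Hl (J_resolvent mu x Hm)) at 2.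
  f_equal. vec_eq. lra.
Qed.

Lemma resolvent_displacement_large beta z : 1 <= beta ->
  hs_norm (hs_sub (J beta z) z) <= beta * hs_norm (hs_sub (J 1 z) z).
Proof.
  intro Hb.
  set (w := hs_add (hs_scal (1 / beta) z) (hs_scal (1 - 1 / beta) (J beta z))).
  pose proof (resolvent_nonexpansive 1 w z Rlt_0_1) as H.
  unfold w in H at 1. rewrite resolvent_identity in H by lra.
  replace (hs_sub w z) with (hs_scal (1 - 1 / beta) (hs_sub (J beta z) z)) in H by (unfold w; vec_eq; lra).
  assert (0 < 1 / beta <= 1).
  { split; [apply Rdiv_lt_0_compat; lra|].
    unfold Rdiv. rewrite Rmult_1_l, <- Rinv_1. apply Rinv_le_contravar; lra. }
  rewrite norm_scal_nonneg in H by lra.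
  pose proof (norm_sub_tri (J beta z) (J 1 z) z).
  replace (hs_norm (hs_sub (J beta z) z)) with (beta * (1 / beta * hs_norm (hs_sub (J beta z) z)))
    by (field; lra).
  apply Rmult_le_compat_l; lra.
Qed.

Lemma resolvent_displacement_small beta z : 0 < beta <= 1 ->
  hs_norm (hs_sub (J beta z) z) <= 2 * hs_norm (hs_sub (J 1 z) z).
Proof.
  intro Hb.
  set (w := hs_add (hs_scal (beta / 1) z) (hs_scal (1 - beta / 1) (J 1 z))).
  pose proof (resolvent_nonexpansive beta w z (proj1 Hb)) as H.
  unfold w in H at 1. rewrite resolvent_identity in H by lra.
  replace (hs_sub w z) with (hs_scal (1 - beta) (hs_sub (J 1 z) z)) in H by (unfold w; vec_eq).
  rewrite norm_scal_nonneg, norm_sub_sym in H by lra.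
  pose proof (norm_sub_tri (J beta z) (J 1 z) z).
  pose proof (norm_nonneg (hs_sub (J 1 z) z)).
  nra.
Qed.

Lemma resolvent_displacement_le beta z : 0 < beta ->
  hs_norm (hs_sub (J beta z) z) <= Rmax 2 beta * hs_norm (hs_sub (J 1 z) z).
Proof.
  intro Hb. pose proof (norm_nonneg (hs_sub (J 1 z) z)).
  destruct (Rle_dec 1 beta).
  - eapply Rle_trans; [apply resolvent_displacement_large; lra|].
    apply Rmult_le_compat_r; [lra | apply Rmax_r].
  - eapply Rle_trans; [apply resolvent_displacement_small; lra|].
    apply Rmult_le_compat_r; [lra | apply Rmax_l].
Qed.

End Resolvent.

Section ConvexCombination.
Context {X : HilbertSpace} (T : X -> X).
Hypothesis T_nonexpansive : forall u v, hs_norm (hs_sub (T u) (T v)) <= hs_norm (hs_sub u v).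

Lemma convex_comb_displacement z y t delta d :
  0 <= t <= 1 ->
  hs_norm (hs_sub z (T z)) <= delta -> hs_norm (hs_sub y (T y)) <= delta ->
  hs_norm (hs_sub z y) <= d ->
  let w := hs_add (hs_scal (1 - t) z) (hs_scal t y) in
  hs_norm (hs_sub w (T w)) * hs_norm (hs_sub w (T w)) <= delta * delta + delta * d.
Proof.
  intros Ht Hz Hy Hd w. set (Tw := T w). set (dzy := hs_norm (hs_sub z y)).
  assert (Hzw : hs_norm (hs_sub z Tw) <= delta + t * dzy).
  { pose proof (norm_sub_tri z (T z) Tw). pose proof (T_nonexpansive z w) as HT.
    replace (hs_sub z w) with (hs_scal t (hs_sub z y)) in HT by (unfold w; vec_eq).
    rewrite norm_scal_nonneg in HT by lra. unfold Tw, dzy in *. lra. }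
  assert (Hyw : hs_norm (hs_sub y Tw) <= delta + (1 - t) * dzy).
  { pose proof (norm_sub_tri y (T y) Tw). pose proof (T_nonexpansive y w) as HT.
    replace (hs_sub y w) with (hs_scal (1 - t) (hs_sub y z)) in HT by (unfold w; vec_eq).
    rewrite norm_scal_nonneg, (norm_sub_sym y z) in HT by lra. unfold Tw, dzy in *. lra. }
  assert (Hid : hs_norm (hs_sub w Tw) * hs_norm (hs_sub w Tw) =
     (1 - t) * (hs_norm (hs_sub z Tw) * hs_norm (hs_sub z Tw))
     + t * (hs_norm (hs_sub y Tw) * hs_norm (hs_sub y Tw)) - t * (1 - t) * (dzy * dzy)).
  { unfold dzy. rewrite !norm_sq. unfold w. expand_inner. sort_inner. ring. }
  pose proof (norm_nonneg (hs_sub z Tw)). pose proof (norm_nonneg (hs_sub y Tw)).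
  assert (0 <= dzy) by apply norm_nonneg.
  assert (0 <= delta) by (pose proof (norm_nonneg (hs_sub z (T z))); lra).
  assert (Hsq_z : (1 - t) * (hs_norm (hs_sub z Tw) * hs_norm (hs_sub z Tw))
     <= (1 - t) * ((delta + t * dzy) * (delta + t * dzy))).
  { apply Rmult_le_compat_l; [lra|]. apply Rmult_le_compat; lra. }
  assert (Hsq_y : t * (hs_norm (hs_sub y Tw) * hs_norm (hs_sub y Tw))
     <= t * ((delta + (1 - t) * dzy) * (delta + (1 - t) * dzy))).
  { apply Rmult_le_compat_l; [lra|]. apply Rmult_le_compat; nra. }
  assert (Hexpand : (1 - t) * ((delta + t * dzy) * (delta + t * dzy))
     + t * ((delta + (1 - t) * dzy) * (delta + (1 - t) * dzy)) - t * (1 - t) * (dzy * dzy)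
     = delta * delta + 4 * t * (1 - t) * (delta * dzy)) by ring.
  assert (4 * t * (1 - t) * (delta * dzy) <= delta * dzy).
  { assert (4 * t * (1 - t) <= 1) by (pose proof (Rle_0_sqr (2 * t - 1)); unfold Rsqr in *; nra).
    assert (0 <= delta * dzy) by (apply Rmult_le_pos; lra). nra. }
  assert (delta * dzy <= delta * d) by (apply Rmult_le_compat_l; [lra|]; unfold dzy; exact Hd).
  rewrite Hid. lra.
Qed.

End ConvexCombination.

(** * Finite sums, products and recursive inequalities *)

(* [rsum_from f m n] and [rprod_from f m n] range over the [n] indices [m], ..., [m + n - 1]. *)
Fixpoint rsum_from (f : nat -> R) (m n : nat) : R :=
  match n with O => 0 | S n => f m + rsum_from f (S m) n end.
Fixpoint rprod_from (f : nat -> R) (m n : nat) : R :=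
  match n with O => 1 | S n => f m * rprod_from f (S m) n end.

Lemma rsum_range_from f m n : rsum_range f m n = rsum_from f m (S n - m).
Proof.
  unfold rsum_range. generalize (S n - m)%nat. intro l. revert m.
  induction l as [|l IH]; intro m; simpl; [reflexivity | now rewrite IH].
Qed.

Lemma rprod_range_from f m n : rprod_range f m n = rprod_from f m (S n - m).
Proof.
  unfold rprod_range. generalize (S n - m)%nat. intro l. revert m.
  induction l as [|l IH]; intro m; simpl; [reflexivity | now rewrite IH].
Qed.

Lemma rsum_from_add f m n l : rsum_from f m (n + l) = rsum_from f m n + rsum_from f (m + n) l.
Proof.
  revert m. induction n as [|n IH]; intro m; simpl.
  - rewrite Nat.add_0_r. ring.
  - rewrite IH, Nat.add_succ_r. simpl. ring.
Qed.

Lemma rprod_from_add f m n l : rprod_from f m (n + l) = rprod_from f m n * rprod_from f (m + n) l.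
Proof.
  revert m. induction n as [|n IH]; intro m; simpl.
  - rewrite Nat.add_0_r. ring.
  - rewrite IH, Nat.add_succ_r. simpl. ring.
Qed.

Lemma sum_f_R0_rsum_from f n : sum_f_R0 f n = rsum_from f 0 (S n).
Proof.
  induction n as [|n IH]; [simpl; ring|].
  rewrite tech5, IH. replace (S (S n)) with (S n + 1)%nat by lia.
  rewrite rsum_from_add. simpl. ring.
Qed.

Lemma rsum_from_plus f g m n :
  rsum_from (fun i => f i + g i) m n = rsum_from f m n + rsum_from g m n.
Proof. revert m. induction n as [|n IH]; intro m; simpl; [ring | rewrite IH; ring]. Qed.

Lemma rsum_from_nonneg f m n : (forall i, 0 <= f i) -> 0 <= rsum_from f m n.
Proof.
  intro Hf. revert m. induction n as [|n IH]; intro m; simpl; [lra|].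
  specialize (IH (S m)). specialize (Hf m). lra.
Qed.

Lemma rprod_from_unit f m n : (forall i, 0 <= f i <= 1) -> 0 <= rprod_from f m n <= 1.
Proof.
  intro Hf. revert m. induction n as [|n IH]; intro m; simpl; [lra|].
  specialize (IH (S m)). specialize (Hf m). nra.
Qed.

Lemma rsum_from_le_const f m n c :
  (forall i, (m <= i < m + n)%nat -> f i <= c) -> rsum_from f m n <= INR n * c.
Proof.
  revert m. induction n as [|n IH]; intros m Hf; simpl rsum_from; [simpl; lra|].
  rewrite S_INR.
  specialize (IH (S m) ltac:(intros i Hi; apply Hf; lia)). specialize (Hf m ltac:(lia)). lra.
Qed.

Lemma rsum_from_subrange f m n m' n' : (forall i, 0 <= f i) ->
  (m <= m')%nat -> (m' + n' <= m + n)%nat -> rsum_from f m' n' <= rsum_from f m n.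
Proof.
  intros Hf H1 H2.
  replace n with ((m' - m) + (n' + (m + n - (m' + n'))))%nat by lia.
  rewrite !rsum_from_add. replace (m + (m' - m))%nat with m' by lia.
  pose proof (rsum_from_nonneg f m (m' - m) Hf).
  pose proof (rsum_from_nonneg f (m' + n') (m + n - (m' + n')) Hf). lra.
Qed.

Lemma rprod_from_antimono f m n n' : (forall i, 0 <= f i <= 1) ->
  (n' <= n)%nat -> rprod_from f m n <= rprod_from f m n'.
Proof.
  intros Hf H. replace n with (n' + (n - n'))%nat by lia. rewrite rprod_from_add.
  pose proof (rprod_from_unit f m n' Hf). pose proof (rprod_from_unit f (m + n') (n - n') Hf). nra.
Qed.

Lemma recursive_ineq_unroll (s al c : nat -> R) (rho K : R) m n :
  (forall i, 0 <= al i <= 1) -> 0 <= rho -> 0 <= K -> (forall i, 0 <= c i) ->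
  (forall i, (m <= i < m + n)%nat -> s (S i) <= (1 - al i) * s i + al i * rho + K * c i) ->
  s (m + n)%nat <= rprod_from (fun i => 1 - al i) m n * s m + rho + K * rsum_from c m n.
Proof.
  intros Hal Hrho HK Hc. induction n as [|n IH]; intro Hs.
  - simpl. rewrite Nat.add_0_r. lra.
  - specialize (IH ltac:(intros i Hi; apply Hs; lia)).
    replace (m + S n)%nat with (S (m + n)) by lia. replace (S n) with (n + 1)%nat by lia.
    rewrite rprod_from_add, rsum_from_add. simpl.
    specialize (Hs (m + n)%nat ltac:(lia)).
    pose proof (Hal (m + n)%nat). pose proof (Hc (m + n)%nat).
    pose proof (rsum_from_nonneg c m n Hc).
    assert (0 <= K * rsum_from c m n) by (apply Rmult_le_pos; lra).
    assert ((1 - al (m + n)%nat) * s (m + n)%nat <= (1 - al (m + n)%nat) *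
      (rprod_from (fun i => 1 - al i) m n * s m + rho + K * rsum_from c m n))
      by (apply Rmult_le_compat_l; lra).
    nra.
Qed.

Lemma small_increment_exists (u : nat -> R) (M eps : R) (n : nat) : (0 < n)%nat ->
  0 <= u 0%nat -> u n <= M -> M <= INR n * eps ->
  exists i, (i < n)%nat /\ u (S i) <= u i + eps.
Proof.
  intros Hn H0 Hu HM.
  assert (Hdich : forall l, (exists i, (i < l)%nat /\ u (S i) <= u i + eps) \/
                           u 0%nat + INR l * eps <= u l).
  { induction l as [|l [[i [Hi Hui]] | IH]].
    - right. simpl. lra.
    - left. exists i. split; [lia | exact Hui].
    - destruct (Rle_dec (u (S l)) (u l + eps)).
      + left. exists l. split; [lia | assumption].
      + right. rewrite S_INR. lra. }
  destruct n as [|n]; [lia|].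
  destruct (Hdich n) as [[i [Hi Hui]] | Hle].
  - exists i. split; [lia | exact Hui].
  - destruct (Rle_dec (u (S n)) (u n + eps)) as [Hlast | Hlast].
    + exists n. split; [lia | exact Hlast].
    + rewrite S_INR in HM. lra.
Qed.

Lemma INR_pred m : (1 <= m)%nat -> INR (m - 1) + 1 = INR m.
Proof. intro Hm. replace m with (S (m - 1)) at 2 by lia. symmetry. apply S_INR. Qed.

Ltac is_numeral n := lazymatch n with O => idtac | S ?m => is_numeral m end.

Ltac simpl_INR := repeat (rewrite mult_INR || rewrite plus_INR || rewrite pow_INR);
  repeat match goal with |- context [INR ?n] => is_numeral n;
    let z := eval cbv in (Z.of_nat n) in
    replace (INR n) with (IZR z) by (rewrite INR_IZR_INZ; reflexivity) end.
Tactic Notation "simpl_INR" "in" hyp(H) := revert H; simpl_INR; intro H.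

Lemma inv_INR_pred m : (1 <= m)%nat -> 1 / (INR (m - 1) + 1) = 1 / INR m.
Proof. intro Hm. now rewrite INR_pred. Qed.

Lemma inv_INR_succ_antimono m m' : (m <= m')%nat -> 1 / (INR m' + 1) <= 1 / (INR m + 1).
Proof.
  intro H. apply le_INR in H. pose proof (pos_INR m).
  apply Rmult_le_compat_l; [lra|]. apply Rinv_le_contravar; lra.
Qed.

Lemma le_inv_mul x c d : 0 < c -> 0 < d -> x <= 1 / (c * d) -> x * c <= 1 / d.
Proof.
  intros Hc Hd H. apply Rmult_le_compat_r with (r := c) in H; [|lra].
  replace (1 / (c * d) * c) with (1 / d) in H by (field; lra). exact H.
Qed.

(** * The HPPA iteration *)

Section HPPA.
Variables (X : HilbertSpace) (A : X -> X -> Prop) (J : R -> X -> X).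
Variables (alpha beta : nat -> R) (e : nat -> X) (x0 : X).
Variables (a b B E : nat -> nat) (A' : nat -> nat -> nat) (D Ec : nat) (p : X).
Hypothesis A_monotone : monotone_op A.
Hypothesis J_resolvent : is_resolvent A J.
Hypothesis alpha_range : forall n, 0 < alpha n < 1.
Hypothesis beta_pos : forall n, 0 < beta n.
Hypothesis a_monotone : nat_monotone a.
Hypothesis b_monotone : nat_monotone b.
Hypothesis B_monotone : nat_monotone B.
Hypothesis E_monotone : nat_monotone E.
Hypothesis A'_monotone :
  forall m m' k k', (k <= k')%nat -> (m <= m')%nat -> (A' m k <= A' m' k')%nat.
Hypothesis Q1 : forall k n, (a k <= n)%nat -> alpha n <= 1 / (INR k + 1).
Hypothesis Q2' : forall k m, rprod_range (fun i => 1 - alpha i) m (A' m k) <= 1 / (INR k + 1).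
Hypothesis Q3' : forall n, beta n <= INR (b n).
Hypothesis Q3 : forall k n, (B k <= n)%nat -> INR k <= beta n.
Hypothesis Q4 : forall k n, rsum_range (fun i => hs_norm (e i)) (E k + 1) (E k + n) <= 1 / (INR k + 1).
Hypothesis Ec_bound : INR Ec >= 1 + sum_f_R0 (fun i => hs_norm (e i)) (E 0%nat).
Hypothesis p_zero : A p hs_zero.
Hypothesis D_bound : INR D >= hs_norm (hs_sub x0 p).

Let x := hppa J alpha beta e x0.
Let err i := hs_norm (e i).
Let N := Defs.Nbound D Ec.

Lemma err_nonneg i : 0 <= err i.
Proof. apply norm_nonneg. Qed.

Lemma err_tail_le K m n : (E K + 1 <= m)%nat -> rsum_from err m n <= 1 / (INR K + 1).
Proof.
  intro Hm. eapply Rle_trans; [| apply (Q4 K (m - (E K + 1) + n))].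
  rewrite rsum_range_from. apply rsum_from_subrange; [apply err_nonneg | lia | lia].
Qed.

Lemma err_le K n : (E K + 1 <= n)%nat -> err n <= 1 / (INR K + 1).
Proof. intro Hn. pose proof (err_tail_le K n 1 Hn) as Htail. simpl in Htail. lra. Qed.

Lemma err_sum_le n : rsum_from err 0 n <= INR Ec.
Proof.
  apply Rle_trans with (rsum_from err 0 (S (E 0%nat) + n)).
  { apply rsum_from_subrange; [apply err_nonneg | lia | lia]. }
  rewrite rsum_from_add, <- sum_f_R0_rsum_from, Nat.add_0_l.
  pose proof (err_tail_le 0 (S (E 0%nat)) n ltac:(lia)) as Htail. simpl INR in Htail.
  unfold err in *. lra.
Qed.

Lemma Ec_ge_1 : 1 <= INR Ec.
Proof.
  pose proof (rsum_from_nonneg err 0 (S (E 0%nat)) err_nonneg) as Hsum.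
  rewrite <- sum_f_R0_rsum_from in Hsum. unfold err in Hsum. lra.
Qed.

Lemma Ec_pos : (1 <= Ec)%nat.
Proof. apply INR_le. exact Ec_ge_1. Qed.

Lemma Nbound_ge_2D : 2 * INR D <= INR N.
Proof.
  pose proof (le_INR _ _ (Nat.le_max_l (2 * D) (D + Ec))) as H. simpl_INR in H. exact H.
Qed.

Lemma Nbound_ge_radius : INR D + INR Ec <= INR N.
Proof.
  pose proof (le_INR _ _ (Nat.le_max_r (2 * D) (D + Ec))) as H. simpl_INR in H. exact H.
Qed.

Lemma Nbound_ge_1 : 1 <= INR N.
Proof. pose proof Nbound_ge_radius. pose proof Ec_ge_1. pose proof (pos_INR D). lra. Qed.

Lemma Nbound_pos : (1 <= N)%nat.
Proof. apply INR_le. exact Nbound_ge_1. Qed.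

Lemma J_fixes_p bt : 0 < bt -> J bt p = p.
Proof. intro Hbt. exact (resolvent_zero A J A_monotone J_resolvent bt p Hbt p_zero). Qed.

Lemma J_nonexpansive bt u v : 0 < bt -> hs_norm (hs_sub (J bt u) (J bt v)) <= hs_norm (hs_sub u v).
Proof. exact (resolvent_nonexpansive A J A_monotone J_resolvent bt u v). Qed.

Lemma hppa_succ n : x (S n) =
  hs_add (hs_scal (alpha n) x0) (hs_scal (1 - alpha n) (hs_add (J (beta n) (x n)) (e n))).
Proof. reflexivity. Qed.

Lemma hppa_dist_le_err n : hs_norm (hs_sub (x n) p) <= INR D + rsum_from err 0 n.
Proof.
  induction n as [|n IH].
  - simpl. change (x 0%nat) with x0. lra.
  - rewrite hppa_succ.
    replace (hs_sub (hs_add (hs_scal (alpha n) x0)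
               (hs_scal (1 - alpha n) (hs_add (J (beta n) (x n)) (e n)))) p)
      with (hs_add (hs_scal (alpha n) (hs_sub x0 p))
              (hs_scal (1 - alpha n) (hs_add (hs_sub (J (beta n) (x n)) (J (beta n) p)) (e n))))
      by (rewrite (J_fixes_p _ (beta_pos n)); vec_eq).
    eapply Rle_trans; [apply norm_convex_comb; specialize (alpha_range n); lra|].
    pose proof (norm_triangle (hs_sub (J (beta n) (x n)) (J (beta n) p)) (e n)).
    pose proof (J_nonexpansive (beta n) (x n) p (beta_pos n)).
    pose proof (rsum_from_nonneg err 0 n err_nonneg).
    pose proof (alpha_range n). pose proof (err_nonneg n).
    replace (S n) with (n + 1)%nat by lia. rewrite rsum_from_add. simpl. unfold err in *.
    apply Rle_trans with (alpha n * INR D + (1 - alpha n) *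
      (INR D + rsum_from (fun i => hs_norm (e i)) 0 n + hs_norm (e n))); [|nra].
    apply Rplus_le_compat; apply Rmult_le_compat_l; lra.
Qed.

Lemma hppa_dist_le n : hs_norm (hs_sub (x n) p) <= INR D + INR Ec.
Proof. pose proof (hppa_dist_le_err n). pose proof (err_sum_le n). lra. Qed.

Lemma ball_dist_le y z : hs_norm (hs_sub y p) <= INR D + INR Ec ->
  hs_norm (hs_sub z p) <= INR D + INR Ec -> hs_norm (hs_sub y z) <= 2 * INR N.
Proof.
  intros Hy Hz. pose proof (norm_sub_tri y p z) as Htri. rewrite (norm_sub_sym p z) in Htri.
  pose proof Nbound_ge_radius. lra.
Qed.

Lemma x0_J_dist_le n : hs_norm (hs_sub x0 (J (beta n) (x n))) <= 2 * INR D + INR Ec.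
Proof.
  pose proof (norm_sub_tri x0 p (J (beta n) (x n))).
  pose proof (J_nonexpansive (beta n) p (x n) (beta_pos n)) as HJ.
  rewrite (J_fixes_p _ (beta_pos n)), (norm_sub_sym p (x n)) in HJ.
  pose proof (hppa_dist_le n). lra.
Qed.

Lemma hppa_step_close K n : (xi a E D Ec K <= n)%nat ->
  hs_norm (hs_sub (x (S n)) (J (beta n) (x n))) <= 1 / (INR K + 1).
Proof.
  unfold xi. intro Hn.
  pose proof (pos_INR D) as HD. pose proof Ec_ge_1 as HEc. pose proof (pos_INR K) as HK.
  pose proof Ec_pos as HEc1.
  assert (Halpha : alpha n * (2 * INR D + INR Ec) <= 1 / (2 * (INR K + 1))).
  { apply le_inv_mul; [lra | lra |].
    pose proof (Q1 (2 * (2 * D + Ec) * (K + 1) - 1) n ltac:(lia)) as Hq.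
    rewrite inv_INR_pred in Hq by nia. simpl_INR in Hq.
    replace ((2 * INR D + INR Ec) * (2 * (INR K + 1))) with (2 * (2 * INR D + INR Ec) * (INR K + 1))
      by ring. exact Hq. }
  assert (Herr : err n <= 1 / (2 * INR K + 1 + 1)).
  { pose proof (err_le (2 * K + 1) n ltac:(lia)) as Hq. simpl_INR in Hq. exact Hq. }
  rewrite hppa_succ.
  replace (hs_sub (hs_add (hs_scal (alpha n) x0)
             (hs_scal (1 - alpha n) (hs_add (J (beta n) (x n)) (e n)))) (J (beta n) (x n)))
    with (hs_add (hs_scal (alpha n) (hs_sub x0 (J (beta n) (x n)))) (hs_scal (1 - alpha n) (e n)))
    by vec_eq.
  pose proof (alpha_range n).
  eapply Rle_trans; [apply norm_convex_comb; lra|].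
  pose proof (x0_J_dist_le n). pose proof (err_nonneg n).
  assert (alpha n * hs_norm (hs_sub x0 (J (beta n) (x n))) <= alpha n * (2 * INR D + INR Ec))
    by (apply Rmult_le_compat_l; lra).
  assert ((1 - alpha n) * err n <= err n) by nra.
  replace (1 / (INR K + 1)) with (1 / (2 * (INR K + 1)) + 1 / (2 * INR K + 1 + 1)) by (field; lra).
  unfold err in *. lra.
Qed.

Lemma hppa_asymptotic_regular K j : (chi1 a B E D Ec K <= j)%nat ->
  hs_norm (hs_sub (x j) (J 1 (x j))) <= 1 / (INR K + 1).
Proof.
  unfold chi1. intro Hj. destruct j as [|n]; [lia|].
  pose proof (pos_INR D) as HD. pose proof Ec_ge_1 as HEc. pose proof (pos_INR K) as HK.
  pose proof Ec_pos as HEc1.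
  pose proof (hppa_step_close (4 * K + 3) n ltac:(lia)) as Hstep. simpl_INR in Hstep.
  assert (Hbeta : 4 * (INR D + INR Ec) * (INR K + 1) <= beta n).
  { pose proof (Q3 (8 * (D + Ec) * (K + 1) - 1) n ltac:(lia)) as Hq.
    rewrite minus_INR in Hq by nia. simpl_INR in Hq. nra. }
  set (z := J (beta n) (x n)) in *.
  set (v := hs_scal (/ beta n) (hs_sub (x n) z)).
  assert (Hfix : J 1 (hs_add z v) = z).
  { rewrite <- (hs_scal_one X v) at 1.
    apply (resolvent_graph A J A_monotone J_resolvent); [lra | apply J_resolvent, beta_pos]. }
  assert (Hv : hs_norm v <= 1 / (2 * (INR K + 1))).
  { pose proof (beta_pos n) as Hb.
    unfold v. rewrite norm_scal_nonneg by (apply Rlt_le, Rinv_0_lt_compat; lra).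
    assert (Hd : hs_norm (hs_sub (x n) z) <= 2 * (INR D + INR Ec)).
    { pose proof (norm_sub_tri (x n) p z).
      pose proof (J_nonexpansive (beta n) p (x n) (beta_pos n)) as Hpz.
      rewrite (J_fixes_p _ (beta_pos n)), (norm_sub_sym p (x n)) in Hpz. fold z in Hpz.
      pose proof (hppa_dist_le n). lra. }
    apply Rmult_le_reg_l with (2 * (INR K + 1) * beta n); [nra|].
    replace (2 * (INR K + 1) * beta n * (/ beta n * hs_norm (hs_sub (x n) z)))
      with (2 * (INR K + 1) * hs_norm (hs_sub (x n) z)) by (field; lra).
    replace (2 * (INR K + 1) * beta n * (1 / (2 * (INR K + 1)))) with (beta n) by (field; lra).
    nra. }
  pose proof (norm_sub_tri (x (S n)) z (J 1 (x (S n)))).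
  pose proof (J_nonexpansive 1 (hs_add z v) (x (S n)) Rlt_0_1) as Hne. rewrite Hfix in Hne.
  replace (hs_sub (hs_add z v) (x (S n))) with (hs_add (hs_sub z (x (S n))) v) in Hne by vec_eq.
  pose proof (norm_triangle (hs_sub z (x (S n))) v) as Htri.
  rewrite (norm_sub_sym z (x (S n))) in Htri.
  replace (1 / (INR K + 1)) with (2 * (1 / (4 * INR K + 3 + 1)) + 1 / (2 * (INR K + 1)))
    by (field; lra).
  lra.
Qed.

Lemma chi1_monotone k1 k2 : (k1 <= k2)%nat -> (chi1 a B E D Ec k1 <= chi1 a B E D Ec k2)%nat.
Proof.
  intro Hk. unfold chi1, xi.
  assert (a (2 * (2 * D + Ec) * (4 * k1 + 3 + 1) - 1) <= a (2 * (2 * D + Ec) * (4 * k2 + 3 + 1) - 1))%nat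
    by (apply a_monotone; nia).
  assert (E (2 * (4 * k1 + 3) + 1) <= E (2 * (4 * k2 + 3) + 1))%nat by (apply E_monotone; lia).
  assert (B (8 * (D + Ec) * (k1 + 1) - 1) <= B (8 * (D + Ec) * (k2 + 1) - 1))%nat
    by (apply B_monotone; nia).
  lia.
Qed.

Definition near_zero (m : nat) (y : X) : Prop :=
  hs_norm (hs_sub y p) <= INR D + INR Ec /\ hs_norm (hs_sub y (J 1 y)) <= 1 / (INR m + 1).

Definition dist2 (y : X) : R := hs_inner (hs_sub x0 y) (hs_sub x0 y).

Lemma near_zero_p m : near_zero m p.
Proof.
  split; rewrite ?(J_fixes_p 1 Rlt_0_1), norm_sub_diag.
  - pose proof (pos_INR D). pose proof (pos_INR Ec). lra.
  - pose proof (pos_INR m). apply Rlt_le, Rdiv_lt_0_compat; lra.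
Qed.

Lemma near_zero_antimono m m' y : (m <= m')%nat -> near_zero m' y -> near_zero m y.
Proof.
  intros Hm [Hy1 Hy2]. split; [exact Hy1|].
  eapply Rle_trans; [exact Hy2 | now apply inv_INR_succ_antimono].
Qed.

Definition neg_dist2_set (m : nat) (t : R) : Prop := exists y, near_zero m y /\ t = - dist2 y.

Lemma neg_dist2_set_bound m : bound (neg_dist2_set m).
Proof.
  exists 0. intros t [y [_ ->]]. unfold dist2. pose proof (hs_inner_pos X (hs_sub x0 y)). lra.
Qed.

Lemma neg_dist2_set_inhabited m : exists t, neg_dist2_set m t.
Proof. exists (- dist2 p). exists p. split; [apply near_zero_p | reflexivity]. Qed.

(* The infimum of [dist2] over [near_zero m], as minus a supremum. *)
Definition dist2_inf (m : nat) : R :=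
  - proj1_sig (completeness _ (neg_dist2_set_bound m) (neg_dist2_set_inhabited m)).

Lemma dist2_inf_le m y : near_zero m y -> dist2_inf m <= dist2 y.
Proof.
  intro Hy. unfold dist2_inf.
  destruct (completeness _ (neg_dist2_set_bound m) (neg_dist2_set_inhabited m)) as [l [Hl_ub Hl_lub]].
  simpl. assert (- dist2 y <= l) by (apply Hl_ub; exists y; split; auto). lra.
Qed.

Lemma dist2_inf_approx m eps : 0 < eps -> exists y, near_zero m y /\ dist2 y <= dist2_inf m + eps.
Proof.
  intro Heps. unfold dist2_inf.
  destruct (completeness _ (neg_dist2_set_bound m) (neg_dist2_set_inhabited m)) as [l [Hl_ub Hl_lub]].
  simpl. apply NNPP. intro Hnone.
  assert (Hub : is_upper_bound (neg_dist2_set m) (l - eps)).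
  { intros t [y [Hy ->]]. apply Rnot_lt_le. intro Hlt. apply Hnone.
    exists y. split; [exact Hy | lra]. }
  specialize (Hl_lub _ Hub). lra.
Qed.

Lemma dist2_inf_nonneg m : 0 <= dist2_inf m.
Proof.
  unfold dist2_inf.
  destruct (completeness _ (neg_dist2_set_bound m) (neg_dist2_set_inhabited m)) as [l [Hl_ub Hl_lub]].
  simpl. assert (l <= 0); [|lra].
  apply Hl_lub. intros t [y [_ ->]]. unfold dist2. pose proof (hs_inner_pos X (hs_sub x0 y)). lra.
Qed.

Lemma dist2_inf_le_D2 m : dist2_inf m <= INR D * INR D.
Proof.
  eapply Rle_trans; [apply (dist2_inf_le m p (near_zero_p m))|].
  unfold dist2. rewrite <- norm_sq. pose proof (norm_nonneg (hs_sub x0 p)).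
  apply Rmult_le_compat; lra.
Qed.

Lemma near_zero_convex_comb n m z y t :
  (24 * N * (n + 1) ^ 2 <= m)%nat -> near_zero m z -> near_zero (24 * N * (n + 1) ^ 2) y ->
  0 <= t <= 1 -> near_zero n (hs_add (hs_scal (1 - t) z) (hs_scal t y)).
Proof.
  intros Hm [Hz1 Hz2] [Hy1 Hy2] Ht.
  pose proof Nbound_ge_1 as HN. pose proof (pos_INR n) as Hn.
  split.
  - replace (hs_sub (hs_add (hs_scal (1 - t) z) (hs_scal t y)) p)
      with (hs_add (hs_scal (1 - t) (hs_sub z p)) (hs_scal t (hs_sub y p))) by vec_eq.
    eapply Rle_trans; [apply norm_triangle|]. rewrite !norm_scal_nonneg by lra. nra.
  - set (L := (24 * N * (n + 1) ^ 2)%nat) in *.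
    set (delta := 1 / (INR L + 1)).
    assert (HL : INR L = 24 * INR N * ((INR n + 1) * (INR n + 1))) by (unfold L; simpl_INR; ring).
    assert (Hdelta : delta * (INR L + 1) = 1) by (unfold delta; pose proof (pos_INR L); field; lra).
    assert (Hdelta0 : 0 < delta) by (unfold delta; pose proof (pos_INR L); apply Rdiv_lt_0_compat; lra).
    pose proof (convex_comb_displacement (J 1) (fun u v => J_nonexpansive 1 u v Rlt_0_1)
      z y t delta (2 * INR N) Ht
      (Rle_trans _ _ _ Hz2 (inv_INR_succ_antimono _ _ Hm)) Hy2 (ball_dist_le z y Hz1 Hy1)) as Hw.
    cbv zeta in Hw.
    apply norm_le_sq; [apply Rlt_le, Rdiv_lt_0_compat; lra|].
    rewrite <- norm_sq.
    (* delta^2 + 2 N delta <= 3 N delta <= 1 / (n + 1)^2 since delta (24 N (n + 1)^2 + 1) = 1 *)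
    assert (delta <= 1) by (pose proof (pos_INR L); nra).
    apply Rle_trans with (3 * INR N * delta); [nra|].
    replace (1 / (INR n + 1) * (1 / (INR n + 1))) with (1 / ((INR n + 1) * (INR n + 1)))
      by (field; lra).
    apply Rmult_le_reg_r with ((INR n + 1) * (INR n + 1)); [nra|].
    replace (1 / ((INR n + 1) * (INR n + 1)) * ((INR n + 1) * (INR n + 1))) with 1 by (field; lra).
    rewrite HL in Hdelta. nra.
Qed.

Lemma near_zero_inner_le k n m z :
  let eps := 1 / (16 * (INR N * INR N) * ((INR k + 1) * (INR k + 1))) in
  dist2_inf m <= dist2_inf n + eps -> dist2 z <= dist2_inf m + eps -> near_zero m z ->
  (24 * N * (n + 1) ^ 2 <= m)%nat ->
  forall y, near_zero (24 * N * (n + 1) ^ 2) y -> hs_inner (hs_sub x0 z) (hs_sub y z) <= 1 / (INR k + 1).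
Proof.
  intros eps Hinf Hz Hzm Hm y Hy.
  pose proof Nbound_ge_1 as HN. pose proof (pos_INR k) as Hk.
  set (K1 := INR k + 1) in *. set (Nr := INR N) in *.
  assert (HK1 : 1 <= K1) by (unfold K1; lra).
  set (t := 1 / (4 * (Nr * Nr) * K1)).
  assert (Ht : 0 < t <= 1).
  { unfold t. split; [apply Rdiv_lt_0_compat; nra|].
    unfold Rdiv. rewrite Rmult_1_l, <- Rinv_1. apply Rinv_le_contravar; nra. }
  pose proof (dist2_inf_le n _ (near_zero_convex_comb n m z y t Hm Hzm Hy ltac:(lra))) as Hw.
  assert (Hexpand : dist2 (hs_add (hs_scal (1 - t) z) (hs_scal t y)) =
     dist2 z - 2 * t * hs_inner (hs_sub x0 z) (hs_sub y z)
     + t * t * (hs_norm (hs_sub y z) * hs_norm (hs_sub y z))).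
  { rewrite norm_sq. unfold dist2. expand_inner. sort_inner. ring. }
  assert (Hyz : hs_norm (hs_sub y z) <= 2 * Nr) by (apply ball_dist_le; [apply Hy | apply Hzm]).
  pose proof (norm_nonneg (hs_sub y z)).
  set (I := hs_inner (hs_sub x0 z) (hs_sub y z)) in *.
  assert (HI : 2 * t * I <= 2 * eps + t * t * (4 * (Nr * Nr))).
  { assert (t * t * (hs_norm (hs_sub y z) * hs_norm (hs_sub y z)) <= t * t * (4 * (Nr * Nr)))
      by (apply Rmult_le_compat_l; nra).
    lra. }
  assert (Heq : 2 * eps + t * t * (4 * (Nr * Nr)) = 2 * t * (3 / (4 * K1))).
  { unfold eps, t. field. split; nra. }
  rewrite Heq in HI.
  assert (I <= 3 / (4 * K1)) by (apply Rmult_le_reg_l with (2 * t); lra).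
  assert (3 / (4 * K1) <= 1 / K1) by (unfold Rdiv; rewrite Rinv_mult;
    assert (0 < / K1) by (apply Rinv_0_lt_compat; lra); lra).
  lra.
Qed.

Lemma wfun_ge (v : nat -> nat) m : (m <= wfun v N m)%nat.
Proof.
  unfold wfun. pose proof Nbound_pos.
  apply Nat.le_trans with (24 * N * (m + 1) ^ 2)%nat; [|apply Nat.le_max_r].
  rewrite Nat.pow_2_r. nia.
Qed.

Lemma iter_wfun_monotone (v : nat -> nat) i j : (i <= j)%nat ->
  (Nat.iter i (wfun v N) 0 <= Nat.iter j (wfun v N) 0)%nat.
Proof. induction 1; [lia|]. simpl. eapply Nat.le_trans; [eassumption | apply wfun_ge]. Qed.

(* Among [R] successive values [dist2_inf (w^(i) 0)], all in [0, D^2], one step increases by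
   at most [eps]; at that step the approximate projection [z] is almost variational. *)
Lemma metastable_projection k (v : nat -> nat) :
  exists n z,
    (n <= Nat.iter (4 * N ^ 4 * (k + 1) ^ 2) (wfun v N) 0)%nat /\
    near_zero (v (24 * N * (n + 1) ^ 2)%nat) z /\
    forall y, near_zero (24 * N * (n + 1) ^ 2) y ->
      hs_inner (hs_sub x0 z) (hs_sub y z) <= 1 / (INR k + 1).
Proof.
  set (R := (4 * N ^ 4 * (k + 1) ^ 2)%nat).
  set (w := fun i => Nat.iter i (wfun v N) 0%nat).
  set (eps := 1 / (16 * (INR N * INR N) * ((INR k + 1) * (INR k + 1)))).
  pose proof Nbound_ge_1 as HN. pose proof (pos_INR k) as Hk. pose proof Nbound_ge_2D as H2D.
  assert (Heps : 0 < eps) by (unfold eps; apply Rdiv_lt_0_compat; nra).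
  assert (HR : (0 < R)%nat).
  { unfold R. pose proof Nbound_pos. pose proof (Nat.pow_le_mono_l 1 N 4 ltac:(lia)) as HN4.
    rewrite Nat.pow_1_l in HN4. rewrite Nat.pow_2_r. nia. }
  destruct (small_increment_exists (fun i => dist2_inf (w i)) (INR D * INR D) eps R HR
    (dist2_inf_nonneg _) (dist2_inf_le_D2 _)) as [i [Hi Hinc]].
  { unfold R, eps. simpl_INR. pose proof (pos_INR D).
    replace (4 * INR N ^ 4 * (INR k + 1) ^ 2 * (1 / (16 * (INR N * INR N) * ((INR k + 1) * (INR k + 1)))))
      with (INR N * INR N / 4) by (field; lra).
    nra. }
  set (n := w i) in *. set (m := w (S i)) in *.
  assert (Hmn : m = wfun v N n) by reflexivity.
  destruct (dist2_inf_approx m eps Heps) as [z [Hz Hzinf]].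
  exists n, z. split; [|split].
  - apply iter_wfun_monotone. lia.
  - apply (near_zero_antimono _ m); [rewrite Hmn; apply Nat.le_max_l | exact Hz].
  - apply (near_zero_inner_le k n m z Hinc Hzinf Hz). rewrite Hmn. apply Nat.le_max_r.
Qed.

Lemma J_beta_displacement_le z H i :
  hs_norm (hs_sub z (J 1 z)) <= 1 / (INR (Nat.max 2 (b H) * (H + 1) - 1) + 1) ->
  (i <= H)%nat -> hs_norm (hs_sub (J (beta i) z) z) <= 1 / (INR H + 1).
Proof.
  intros Hz Hi.
  rewrite inv_INR_pred in Hz by (pose proof (Nat.le_max_l 2 (b H)); nia). simpl_INR in Hz.
  set (M := INR (Nat.max 2 (b H))) in *.
  assert (HM2 : 2 <= M).
  { pose proof (le_INR _ _ (Nat.le_max_l 2 (b H))) as HM. simpl_INR in HM. exact HM. }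
  assert (HMbeta : Rmax 2 (beta i) <= M).
  { apply Rmax_lub; [exact HM2|]. eapply Rle_trans; [apply Q3'|].
    unfold M. apply le_INR. eapply Nat.le_trans; [apply b_monotone, Hi | apply Nat.le_max_r]. }
  pose proof (resolvent_displacement_le A J A_monotone J_resolvent (beta i) z (beta_pos i)) as Hd.
  rewrite (norm_sub_sym (J 1 z) z) in Hd.
  pose proof (norm_nonneg (hs_sub z (J 1 z))). pose proof (pos_INR H).
  pose proof (beta_pos i). pose proof (Rmax_l 2 (beta i)).
  eapply Rle_trans; [exact Hd|].
  apply Rle_trans with (M * (1 / (M * (INR H + 1)))); [apply Rmult_le_compat; lra|].
  right. field. lra.
Qed.

Lemma hppa_dist2_step z i r :
  hs_norm (hs_sub z p) <= INR D + INR Ec ->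
  hs_inner (hs_sub x0 z) (hs_sub (x (S i)) z) <= r ->
  hs_norm (hs_sub (J (beta i) z) z) + err i <= 1 ->
  hs_inner (hs_sub (x (S i)) z) (hs_sub (x (S i)) z) <=
    (1 - alpha i) * hs_inner (hs_sub (x i) z) (hs_sub (x i) z) + alpha i * (2 * r)
    + (1 + 4 * INR N) * (hs_norm (hs_sub (J (beta i) z) z) + err i).
Proof.
  intros Hz Hr Hc.
  set (w := hs_add (J (beta i) (x i)) (e i)).
  set (c := hs_norm (hs_sub (J (beta i) z) z) + err i) in *.
  set (d := hs_norm (hs_sub (x i) z)).
  assert (Hw : hs_norm (hs_sub w z) <= d + c).
  { replace (hs_sub w z) with (hs_add (hs_add (hs_sub (J (beta i) (x i)) (J (beta i) z))
        (hs_sub (J (beta i) z) z)) (e i)) by (unfold w; vec_eq).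
    eapply Rle_trans; [apply norm_triangle|].
    pose proof (norm_triangle (hs_sub (J (beta i) (x i)) (J (beta i) z)) (hs_sub (J (beta i) z) z)).
    pose proof (J_nonexpansive (beta i) (x i) z (beta_pos i)). unfold c, d, err in *. lra. }
  assert (Hd : d <= 2 * INR N) by (apply ball_dist_le; [apply hppa_dist_le | exact Hz]).
  assert (Hd0 : 0 <= d) by apply norm_nonneg.
  assert (Hc0 : 0 <= c) by (pose proof (norm_nonneg (hs_sub (J (beta i) z) z)); pose proof (err_nonneg i);
    unfold c; lra).
  pose proof (alpha_range i) as Hal. pose proof (norm_nonneg (hs_sub w z)).
  rewrite hppa_succ. fold w. rewrite convex_comb_sub_sq, <- hppa_succ.
  rewrite <- !norm_sq. fold d.
  assert (Hw2 : (1 - alpha i) * (1 - alpha i) * (hs_norm (hs_sub w z) * hs_norm (hs_sub w z))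
                <= (1 - alpha i) * ((d + c) * (d + c))).
  { set (W := hs_norm (hs_sub w z) * hs_norm (hs_sub w z)).
    assert (W <= (d + c) * (d + c)) by (apply Rmult_le_compat; lra).
    assert (0 <= alpha i * ((1 - alpha i) * W))
      by (apply Rmult_le_pos; [lra | apply Rmult_le_pos; unfold W; nra]).
    assert ((1 - alpha i) * W <= (1 - alpha i) * ((d + c) * (d + c)))
      by (apply Rmult_le_compat_l; lra).
    lra. }
  (* (d + c)^2 <= d^2 + (1 + 4 N) c, since c <= 1 and d <= 2 N *)
  assert (Hdc : (1 - alpha i) * ((d + c) * (d + c)) <= (1 - alpha i) * (d * d) + (1 + 4 * INR N) * c).
  { assert (0 <= c * (2 * d + c)) by (apply Rmult_le_pos; lra).
    assert ((1 - alpha i) * (c * (2 * d + c)) <= c * (2 * d + c)) by nra.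
    assert (c * (2 * d + c) <= c * (1 + 4 * INR N)) by (apply Rmult_le_compat_l; lra).
    nra. }
  assert (2 * alpha i * hs_inner (hs_sub x0 z) (hs_sub (x (S i)) z) <= alpha i * (2 * r)) by nra.
  assert (0 <= alpha i * alpha i * (hs_norm (hs_sub x0 z) * hs_norm (hs_sub x0 z)))
    by (pose proof (norm_nonneg (hs_sub x0 z)); apply Rmult_le_pos; nra).
  lra.
Qed.

Lemma hppa_dist2_window z r delta K m n :
  hs_norm (hs_sub z p) <= INR D + INR Ec -> 0 <= r ->
  (forall i, (m <= i)%nat -> hs_inner (hs_sub x0 z) (hs_sub (x (S i)) z) <= r) ->
  (forall i, (m <= i < m + n)%nat -> hs_norm (hs_sub (J (beta i) z) z) <= delta) ->
  delta + 1 / (INR K + 1) <= 1 -> (E K + 1 <= m)%nat ->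
  hs_inner (hs_sub (x (m + n)) z) (hs_sub (x (m + n)) z) <=
    rprod_from (fun i => 1 - alpha i) m n * (4 * (INR N * INR N)) + 2 * r
    + (1 + 4 * INR N) * (INR n * delta + 1 / (INR K + 1)).
Proof.
  intros Hz Hr Hinner HJ Hdelta HE.
  set (c := fun i => hs_norm (hs_sub (J (beta i) z) z) + err i).
  assert (Hc : forall i, 0 <= c i).
  { intro i. pose proof (norm_nonneg (hs_sub (J (beta i) z) z)). pose proof (err_nonneg i).
    unfold c. lra. }
  pose proof Nbound_ge_1 as HN.
  assert (Hal : forall i, 0 <= 1 - alpha i <= 1) by (intro i; pose proof (alpha_range i); lra).
  pose proof (recursive_ineq_unroll (fun j => hs_inner (hs_sub (x j) z) (hs_sub (x j) z)) alpha c
    (2 * r) (1 + 4 * INR N) m n ltac:(intro i; pose proof (alpha_range i); lra) ltac:(lra) ltac:(lra) Hc)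
    as Hunroll.
  cbv beta in Hunroll. eapply Rle_trans; [apply Hunroll|].
  - intros i Hi. apply hppa_dist2_step; [exact Hz | apply Hinner; lia |].
    pose proof (HJ i Hi). pose proof (err_le K i ltac:(lia)). unfold err in *. lra.
  - assert (Hs : hs_inner (hs_sub (x m) z) (hs_sub (x m) z) <= 4 * (INR N * INR N)).
    { rewrite <- norm_sq. pose proof (ball_dist_le (x m) z (hppa_dist_le m) Hz).
      pose proof (norm_nonneg (hs_sub (x m) z)). nra. }
    assert (Hsum : rsum_from c m n <= INR n * delta + 1 / (INR K + 1)).
    { unfold c. rewrite rsum_from_plus.
      pose proof (rsum_from_le_const _ m n delta HJ). pose proof (err_tail_le K m n HE). lra. }
    pose proof (rprod_from_unit _ m n Hal).
    apply Rplus_le_compat; [apply Rplus_le_compat_r|].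
    + apply Rmult_le_compat_l; lra.
    + apply Rmult_le_compat_l; lra.
Qed.

Lemma A'_ge m k : (1 <= k)%nat -> (m <= A' m k)%nat.
Proof.
  intro Hk. destruct (le_lt_dec m (A' m k)) as [Hle | Hlt]; [exact Hle | exfalso].
  pose proof (Q2' k m) as Hq. rewrite rprod_range_from in Hq.
  replace (S (A' m k) - m)%nat with 0%nat in Hq by lia. simpl in Hq.
  apply le_INR in Hk. simpl in Hk.
  assert (1 / (INR k + 1) < 1); [|lra].
  apply Rmult_lt_reg_r with (INR k + 1); [lra|].
  replace (1 / (INR k + 1) * (INR k + 1)) with 1 by (field; lra). lra.
Qed.

Lemma sigma2_monotone k m m' : (m <= m')%nat -> (sigma2 A' N k m <= sigma2 A' N k m')%nat.
Proof. intro Hm. unfold sigma2. apply Nat.add_le_mono_r, A'_monotone; lia. Qed.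

Lemma window_rate_le (kk Nr F l pi r delta eK : R) :
  1 <= kk -> 1 <= Nr -> 0 <= l <= F -> 0 <= pi ->
  pi <= 1 / (16 * Nr ^ 2 * (4 * kk ^ 2)) ->
  r = 1 / (32 * kk ^ 2) ->
  delta = 1 / ((1 + 4 * Nr) * (16 * kk ^ 2 * (F + 1) + 1)) ->
  eK = 1 / (16 * (1 + 4 * Nr) * kk ^ 2) ->
  pi * (4 * (Nr * Nr)) + 2 * r + (1 + 4 * Nr) * (l * delta + eK)
    <= 1 / (2 * kk) * (1 / (2 * kk)).
Proof.
  intros Hkk HNr Hl Hpi0 Hpi -> -> ->.
  (* each of the four contributions is at most 1 / (16 kk^2) *)
  set (u := 1 / (16 * kk ^ 2)).
  assert (Hkk2 : 1 <= kk ^ 2) by nra.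
  assert (H1 : pi * (4 * (Nr * Nr)) <= u).
  { apply Rle_trans with (1 / (16 * Nr ^ 2 * (4 * kk ^ 2)) * (4 * (Nr * Nr)));
      [apply Rmult_le_compat_r; nra|].
    right. unfold u. field. nra. }
  assert (H2 : 2 * (1 / (32 * kk ^ 2)) = u) by (unfold u; field; lra).
  assert (H3 : (1 + 4 * Nr) * (l * (1 / ((1 + 4 * Nr) * (16 * kk ^ 2 * (F + 1) + 1))))
               <= u).
  { unfold u. apply Rmult_le_reg_r with ((16 * kk ^ 2 * (F + 1) + 1) * (16 * kk ^ 2)); [nra|].
    replace ((1 + 4 * Nr) * (l * (1 / ((1 + 4 * Nr) * (16 * kk ^ 2 * (F + 1) + 1))))
             * ((16 * kk ^ 2 * (F + 1) + 1) * (16 * kk ^ 2)))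
      with (l * (16 * kk ^ 2)) by (field; nra).
    replace (1 / (16 * kk ^ 2) * ((16 * kk ^ 2 * (F + 1) + 1) * (16 * kk ^ 2)))
      with (16 * kk ^ 2 * (F + 1) + 1) by (field; nra).
    nra. }
  assert (H4 : (1 + 4 * Nr) * (1 / (16 * (1 + 4 * Nr) * kk ^ 2)) = u) by (unfold u; field; nra).
  replace (1 / (2 * kk) * (1 / (2 * kk))) with (4 * u) by (unfold u; field; lra).
  rewrite Rmult_plus_distr_l. lra.
Qed.

Lemma hppa_close_to_anchor k F m z :
  let H := ((1 + 4 * N) * (16 * (k + 1) ^ 2 * (F + 1) + 1) - 1)%nat in
  hs_norm (hs_sub z p) <= INR D + INR Ec ->
  (forall i, (m <= i)%nat ->
     hs_inner (hs_sub x0 z) (hs_sub (x (S i)) z) <= 1 / (INR (32 * (k + 1) ^ 2 - 1) + 1)) ->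
  (forall i, (i <= H)%nat -> hs_norm (hs_sub (J (beta i) z) z) <= 1 / (INR H + 1)) ->
  (E (16 * (1 + 4 * N) * (k + 1) ^ 2 - 1) + 1 <= m)%nat ->
  forall j, (sigma2 A' N (4 * (k + 1) ^ 2 - 1) m <= j <= F)%nat ->
  hs_norm (hs_sub (x j) z) <= 1 / (2 * (INR k + 1)).
Proof.
  intros H Hz Hinner HJ HE j Hj.
  pose proof Nbound_ge_1 as HN. pose proof Nbound_pos as HN1. pose proof (pos_INR k) as Hk.
  assert (Hk2 : (1 <= (k + 1) ^ 2)%nat) by (rewrite Nat.pow_2_r; nia).
  set (K2 := (16 * N ^ 2 * (4 * (k + 1) ^ 2 - 1 + 1) - 1)%nat).
  assert (HK2 : (1 <= K2)%nat) by (unfold K2; rewrite Nat.pow_2_r; nia).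
  assert (HK2r : INR K2 + 1 = 16 * INR N ^ 2 * (4 * (INR k + 1) ^ 2)).
  { unfold K2. rewrite Nat.sub_add by lia. rewrite INR_pred by (rewrite Nat.pow_2_r; nia).
    simpl_INR. reflexivity. }
  unfold sigma2 in Hj. fold K2 in Hj. pose proof (A'_ge m K2 HK2).
  replace j with (m + (j - m))%nat by lia.
  apply norm_le_sq; [apply Rlt_le, Rdiv_lt_0_compat; lra|].
  eapply Rle_trans.
  { apply (hppa_dist2_window z (1 / (INR (32 * (k + 1) ^ 2 - 1) + 1)) (1 / (INR H + 1)) (16 * (1 + 4 * N) * (k + 1) ^ 2 - 1) m (j - m)
      Hz); [| exact Hinner | | | exact HE].
    - apply Rlt_le, Rdiv_lt_0_compat; [lra|]. pose proof (pos_INR (32 * (k + 1) ^ 2 - 1)). lra.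
    - intros i Hi. apply HJ. unfold H. nia.
    - pose proof (inv_INR_succ_antimono 1 H ltac:(unfold H; nia)).
      pose proof (inv_INR_succ_antimono 1 (16 * (1 + 4 * N) * (k + 1) ^ 2 - 1) ltac:(nia)).
      change (INR 1) with 1 in *. lra. }
  apply window_rate_le with (F := INR F); try lra.
  - split; [apply pos_INR | apply le_INR; lia].
  - apply rprod_from_unit. intro i. pose proof (alpha_range i). lra.
  - rewrite <- HK2r. eapply Rle_trans; [|apply (Q2' K2 m)]. rewrite rprod_range_from.
    apply rprod_from_antimono; [intro i; pose proof (alpha_range i); lra | lia].
  - rewrite inv_INR_pred by lia. simpl_INR. reflexivity.
  - unfold H. rewrite inv_INR_pred by nia. simpl_INR. reflexivity.
  - rewrite inv_INR_pred by nia. simpl_INR. reflexivity.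
Qed.

Lemma hppa_metastable k f : nat_monotone f ->
  exists n, (n <= Phi2 a b B E A' D Ec k f)%nat /\
    forall i j, (n <= i <= f n)%nat -> (n <= j <= f n)%nat ->
      hs_norm (hs_sub (x i) (x j)) <= 1 / (INR k + 1).
Proof.
  intro Hf.
  set (kt := (4 * (k + 1) ^ 2 - 1)%nat).
  set (g := fun m => Nat.max m (E (16 * (1 + 4 * N) * (k + 1) ^ 2 - 1) + 1)).
  set (hbar := fun m => ((1 + 4 * N) * (16 * (k + 1) ^ 2 * (f (sigma2 A' N kt (g m)) + 1) + 1) - 1)%nat).
  set (k' := (32 * (k + 1) ^ 2 - 1)%nat).
  destruct (metastable_projection k' (fun m => nu b hbar (chi1 a B E D Ec m)))
    as [n' [z [Hn' [[Hz HzJ] Hvar]]]].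
  set (n0 := chi1 a B E D Ec (24 * N * (n' + 1) ^ 2)) in *.
  set (sig := sigma2 A' N kt (g n0)).
  assert (Hclose : forall j, (sig <= j <= f sig)%nat ->
                     hs_norm (hs_sub (x j) z) <= 1 / (2 * (INR k + 1))).
  { apply (hppa_close_to_anchor k (f sig) (g n0) z Hz).
    - intros i Hi. apply Hvar. split; [apply hppa_dist_le | apply hppa_asymptotic_regular].
      unfold g in Hi. lia.
    - intros i Hi. exact (J_beta_displacement_le z (hbar n0) i HzJ Hi).
    - apply Nat.le_max_r. }
  exists sig. split.
  - change (sig <= sigma2 A' N kt (g (Psi a b B E D Ec k' hbar)))%nat.
    apply sigma2_monotone, Nat.max_le_compat_r, chi1_monotone.
    apply Nat.mul_le_mono_l, Nat.pow_le_mono_l, Nat.add_le_mono_r. exact Hn'.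
  - intros i j Hi Hj.
    pose proof (norm_sub_tri (x i) z (x j)) as Htri. rewrite (norm_sub_sym z (x j)) in Htri.
    pose proof (Hclose i Hi). pose proof (Hclose j Hj). pose proof (pos_INR k).
    replace (1 / (INR k + 1)) with (1 / (2 * (INR k + 1)) + 1 / (2 * (INR k + 1))) by (field; lra).
    lra.
Qed.

End HPPA.

Theorem mainTheorem14
  (X : HilbertSpace) (A : X -> X -> Prop) (J : R -> X -> X)
  (alpha beta : nat -> R) (e : nat -> X) (x0 : X)
  (a b B E : nat -> nat) (A' : nat -> nat -> nat) (D Ec : nat) (p : X) :
  maximal_monotone A ->
  is_resolvent A J ->
  (forall n, 0 < alpha n < 1) ->
  (forall n, 0 < beta n) ->
  nat_monotone a -> nat_monotone b -> nat_monotone B -> nat_monotone E ->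
  (forall m m' k k', (k <= k')%nat -> (m <= m')%nat -> (A' m k <= A' m' k')%nat) ->
  (* (Q1) *) (forall k n, (a k <= n)%nat -> alpha n <= 1 / (INR k + 1)) ->
  (* (Q2') *) (forall k m, rprod_range (fun i => 1 - alpha i) m (A' m k) <= 1 / (INR k + 1)) ->
  (* (Q3') *) (forall n, beta n <= INR (b n)) ->
  (* (Q3) *) (forall k n, (B k <= n)%nat -> INR k <= beta n) ->
  (* (Q4) *) (forall k n, rsum_range (fun i => hs_norm (e i)) (E k + 1) (E k + n) <= 1 / (INR k + 1)) ->
  INR Ec >= 1 + sum_f_R0 (fun i => hs_norm (e i)) (E 0%nat) ->
  A p hs_zero ->
  INR D >= hs_norm (hs_sub x0 p) ->
  forall (k : nat) (f : nat -> nat), nat_monotone f ->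
    exists n, (n <= Phi2 a b B E A' D Ec k f)%nat /\
      forall i j, (n <= i <= f n)%nat -> (n <= j <= f n)%nat ->
        hs_norm (hs_sub (hppa J alpha beta e x0 i) (hppa J alpha beta e x0 j)) <= 1 / (INR k + 1).
Proof.
  intros [A_monotone _] J_resolvent. intros.
  eapply hppa_metastable; eassumption.
Qed.
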